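(* Let $p$ be a prime with $p\equiv3\pmod 4$. Then $P_{\frac{p-1}2}(3)\equiv0\pmod p$ (i.e. $p$ divides the numerator of the rational number $P_{\frac{p-1}2}(3)$).
   Context: $P_n(x)$ is the $n$-th Legendre polynomial, defined by $\frac1{\sqrt{1-2xt+t^2}}=\sum_{n\ge0}P_n(x)t^n$, equivalently $P_n(x)=\frac1{2^n}\sum_{k=0}^{[n/2]}\frac{(-1)^k(2n-2k)!}{k!(n-k)!(n-2k)!}x^{n-2k}$. *)

From mathcomp Require Import all_boot all_order all_algebra.
Set Implicit Arguments. Unset Strict Implicit. Unset Printing Implicit Defensive.
Import Order.TTheory GRing.Theory Num.Theory.
Local Open Scope ring_scope.

Definition legendreP (n : nat) (x : rat) : rat :=
  (2%:R ^+ n)^-1 *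
  \sum_(0 <= k < (n./2).+1)
     ((-1) ^+ k * ((2 * n - 2 * k)`!)%:R
        / ((k`!)%:R * ((n - k)`!)%:R * ((n - 2 * k)`!)%:R)) * x ^+ (n - 2 * k).

From mathcomp Require Import all_boot all_order all_algebra fingroup cyclic finfield.
From mathcomp Require Import ring zify.
Set Implicit Arguments. Unset Strict Implicit. Unset Printing Implicit Defensive.
Import GRing.Theory Num.Theory FinRing.Theory.
Local Open Scope ring_scope.

(* Write n = (p - 1)/2. Then 2^n P_n(3) is the integer
   B_n = sum_k (-1)^k C(n,k) C(2n-2k,n) 3^(n-2k), which is also the coefficient of X^(2n) in
   (X((X+3)^2-1))^n = (X(X+2)(X+4))^n. Summing over F_p a polynomial of degree < 2(p-1) yields
   minus its coefficient of X^(p-1), hence B_n = - sum_u (u(u+2)(u+4))^n in F_p. When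
   p = 3 mod 4, n is odd and u -> -4-u negates u(u+2)(u+4), so this sum vanishes; as p is odd,
   p | B_n forces p to divide the numerator of P_n(3). *)

Section FiniteFieldSums.
Variable F : finFieldType.

Lemma natr_card_finField : #|F|%:R = 0 :> F.
Proof. by have := expg_cardG (in_setT (1 : F)); rewrite cardsT zmodXgE. Qed.

Lemma card_finField_pred_gt0 : (0 < #|F|.-1)%N.
Proof. by rewrite -subn1 subn_gt0 (finNzRing_gt1 F). Qed.

Lemma expf_card_pred (u : F) : u != 0 -> u ^+ #|F|.-1 = 1.
Proof.
move=> u0; apply: (mulfI u0); rewrite -exprS mulr1.
by rewrite prednK ?expf_card // (ltn_trans _ (finNzRing_gt1 F)).
Qed.

Lemma exists_expf_neq1 m : (0 < m < #|F|.-1)%N -> exists2 a : F, a != 0 & a ^+ m != 1.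
Proof.
case/andP=> m_gt0 m_lt; apply/exists_inP; apply: contraLR m_lt => /exists_inPn all1.
rewrite -leqNgt -(cardC1 (0 : F)) cardE -ltnS -(size_XnsubC (1 : F) m_gt0).
apply: max_poly_roots; last exact: enum_uniq.
  by rewrite -size_poly_eq0 size_XnsubC.
apply/allP => x; rewrite mem_enum inE => /all1.
by rewrite negbK rootE !hornerE => /eqP->; rewrite subrr.
Qed.

Lemma sum_expr_finField m : (0 < m)%N ->
  \sum_(u : F) u ^+ m = - (#|F|.-1 %| m)%N%:R.
Proof.
move=> m_gt0.
have [dvd_q1_m | ndvd_q1_m] := boolP (#|F|.-1 %| m)%N.
  rewrite (bigD1 0) //= expr0n gtn_eqF // add0r.
  rewrite (eq_bigr (fun=> 1)) => [|u u0]; last first.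
    by case/dvdnP: dvd_q1_m => k ->; rewrite mulnC exprM expf_card_pred ?expr1n.
  rewrite sumr_const cardC1; apply: (addIr 1).
  by rewrite natr1 prednK ?natr_card_finField ?addNr // ltnW // (finNzRing_gt1 F).
set r := (m %% #|F|.-1)%N.
have r_gt0 : (0 < r)%N by rewrite lt0n.
have r_lt : (r < #|F|.-1)%N by rewrite ltn_mod card_finField_pred_gt0.
have expr_mod (u : F) : u ^+ m = u ^+ r.
  have [-> | u0] := eqVneq u 0; first by rewrite !expr0n !gtn_eqF.
  by rewrite {1}(divn_eq m #|F|.-1) exprD mulnC exprM expf_card_pred // expr1n mul1r.
rewrite mulr0n oppr0 (eq_bigr _ (fun u _ => expr_mod u)).
have [a a0 ar] := exists_expf_neq1 (introT andP (conj r_gt0 r_lt)).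
set S := \sum_(u : F) u ^+ r.
have S_aS : S = a ^+ r * S.
  rewrite {1}/S (reindex_inj (mulfI a0)) mulr_sumr.
  by apply: eq_bigr => u _; rewrite exprMn.
have : (1 - a ^+ r) * S = 0 by rewrite mulrBl mul1r -S_aS subrr.
by move/eqP; rewrite mulf_eq0 subr_eq0 eq_sym (negbTE ar) => /eqP.
Qed.

Lemma sum_expr_lt_finField i : (i < (#|F|.-1).*2)%N ->
  \sum_(u : F) u ^+ i = - (i == #|F|.-1)%:R.
Proof.
move=> i_lt; have [-> | i_gt0] := posnP i.
  rewrite (eq_bigr (fun=> 1)) // sumr_const natr_card_finField.
  by rewrite eq_sym gtn_eqF ?card_finField_pred_gt0 // mulr0n oppr0.
rewrite (sum_expr_finField i_gt0); congr (- (1 *+ nat_of_bool _)).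
apply/idP/eqP => [/dvdnP[k i_k] | ->//]; move: i_gt0 i_lt; rewrite i_k -muln2.
by case: k {i_k} => [|[|k]]; rewrite ?mul0n ?mul1n // mulnC ltn_pmul2l ?card_finField_pred_gt0.
Qed.

Lemma sum_horner_finField (P : {poly F}) : (size P <= (#|F|.-1).*2)%N ->
  \sum_(u : F) P.[u] = - P`_(#|F|.-1).
Proof.
move=> sizeP; under eq_bigr do rewrite horner_coef.
rewrite exchange_big /=.
under eq_bigr => i _ do rewrite -mulr_sumr sum_expr_lt_finField ?(leq_trans _ sizeP) //.
under eq_bigr do rewrite mulrN mulr_natr mulrb.
rewrite sumrN; congr (- _).
by rewrite -big_mkcond big_ord1_eq; case: ltnP => // /(nth_default 0) ->.
Qed.
End FiniteFieldSums.

Definition scaled_legendre (R : nzRingType) n (x : R) : R :=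
  \sum_(0 <= k < n./2.+1)
    (-1) ^+ k * ('C(n, k) * 'C(2 * n - 2 * k, n))%:R * x ^+ (n - 2 * k).

Lemma coef_XaddC_exp (R : comNzRingType) (c : R) m j :
  (('X + c%:P) ^+ m)`_j = c ^+ (m - j) *+ 'C(m, j).
Proof.
rewrite addrC exprDn coef_sum.
under eq_bigr do rewrite -rmorphXn /= mul_polyC scalerMnl coefZ coefXn mulr_natr mulrb eq_sym.
rewrite -big_mkcond (big_ord1_eq _ (fun i => c ^+ (m - i) *+ 'C(m, i)) j m.+1) ltnS.
by case: leqP => // /bin_small ->; rewrite mulr0n.
Qed.

Lemma coef_scaled_legendre (R : comNzRingType) (c : R) n :
  ((('X + c%:P) ^+ 2 - 1) ^+ n)`_n = scaled_legendre n c.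
Proof.
rewrite exprDn coef_sum.
under eq_bigr do rewrite -(rmorph_sign (@polyC R)) -exprM coefMn coefMC coef_XaddC_exp.
rewrite -(big_mkord xpredT
  (fun i => c ^+ (2 * (n - i) - n) *+ 'C(2 * (n - i), n) * (-1) ^+ i *+ 'C(n, i))).
have half_le : (n./2.+1 <= n.+1)%N by rewrite ltnS -divn2 leq_div.
rewrite (big_cat_nat (leq0n _) half_le) /= [X in _ + X]big_nat_cond [X in _ + X]big1 ?addr0 => [|k].
  apply: eq_big_nat => k /andP[_]; rewrite ltnS geq_half_double -muln2 => k_le.
  rewrite mulnBr (_ : (2 * n - 2 * k - n = n - 2 * k)%N); last by lia.
  ring.
rewrite andbT => /andP[]; rewrite ltnS ltn_half_double -muln2 => n_lt k_le.
rewrite bin_small ?mulr0n ?mul0r ?mul0rn //; lia.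
Qed.

Lemma sum_eq0_antisym (R : idomainType) (I : finType) (s : I -> I) (g : I -> R) :
  involutive s -> 2%:R != 0 :> R -> (forall i, g (s i) = - g i) -> \sum_i g i = 0.
Proof.
move=> s_inv two_neq0 g_s; set S := \sum_i g i.
have S_opp : S = - S.
  rewrite {1}/S (reindex_inj (inv_inj s_inv)) -sumrN.
  by apply: eq_bigr => i _; rewrite g_s.
have : 2%:R * S = 0 by rewrite mulr2n mulrDl mul1r {1}S_opp addNr.
by move/eqP; rewrite mulf_eq0 (negbTE two_neq0) => /eqP.
Qed.

Lemma rmorph_scaled_legendre (R S : nzRingType) (f : {rmorphism R -> S}) n x :
  f (scaled_legendre n x) = scaled_legendre n (f x).
Proof.
rewrite rmorph_sum; apply: eq_bigr => k _.
by rewrite 2!rmorphM rmorph_sign rmorph_nat rmorphXn.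
Qed.

Lemma legendre_fact_ratio (F : numFieldType) n k : (2 * k <= n)%N ->
  ((2 * n - 2 * k)`!)%:R / ((k`!)%:R * ((n - k)`!)%:R * ((n - 2 * k)`!)%:R)
  = ('C(n, k) * 'C(2 * n - 2 * k, n))%:R :> F.
Proof.
move=> k_le; rewrite -!natrM.
have -> : (2 * n - 2 * k)`!
    = ('C(n, k) * 'C(2 * n - 2 * k, n) * (k`! * (n - k)`! * (n - 2 * k)`!))%N.
  rewrite -(@bin_fact (2 * n - 2 * k) n); last by lia.
  rewrite (_ : 2 * n - 2 * k - n = n - 2 * k)%N; last by lia.
  by rewrite -(@bin_fact n k); [ring | lia].
by rewrite natrM mulfK // pnatr_eq0 -lt0n !muln_gt0 !fact_gt0.
Qed.

Lemma legendrePE n x : legendreP n x = (2%:R ^+ n)^-1 * scaled_legendre n x.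
Proof.
congr (_ * _); apply: eq_big_nat => k /andP[_]; rewrite ltnS geq_half_double -muln2 mulnC => k_le.
by rewrite -legendre_fact_ratio // !mulrA.
Qed.

Definition legendre_cubic (R : nzRingType) (c : R) : {poly R} :=
  'X * (('X + c%:P) ^+ 2 - 1).

Lemma size_legendre_cubic_exp (R : nzRingType) (c : R) n :
  (size (legendre_cubic c ^+ n) <= (3 * n).+1)%N.
Proof.
have size_cubic : (size (legendre_cubic c) <= 4)%N.
  apply: leq_trans (size_polyMleq _ _) _; rewrite size_polyX ltnS.
  apply: leq_trans (size_polyD _ _) _; rewrite geq_max size_polyN size_polyC oner_neq0 andbT.
  by apply: leq_trans (size_poly_exp_leq _ _) _; rewrite size_XaddC.
apply: leq_trans (size_poly_exp_leq _ _) _; rewrite ltnS leq_mul2r.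
by rewrite -subn1 leq_subLR size_cubic orbT.
Qed.

Lemma coef_legendre_cubic_exp (R : comNzRingType) (c : R) n :
  (legendre_cubic c ^+ n)`_(n.*2) = scaled_legendre n c.
Proof.
by rewrite exprMn coefXnM -addnn ltnNge leq_addr addnK coef_scaled_legendre.
Qed.

Lemma scaled_legendre_eq0_finField (F : finFieldType) n :
  odd n -> #|F| = n.*2.+1 -> scaled_legendre n (3%:R : F) = 0.
Proof.
move=> n_odd cardF.
have two_neq0 : 2%:R != 0 :> F.
  apply/eqP => two0; have := natr_card_finField F.
  by rewrite cardF -addn1 -muln2 natrD natrM two0 mulr0 add0r => /eqP; rewrite oner_eq0.
have size_le : (size (legendre_cubic (3%:R : F) ^+ n) <= (#|F|.-1).*2)%N.
  apply: leq_trans (size_legendre_cubic_exp _ _) _.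
  have n_gt0 : (0 < n)%N by case: n n_odd {cardF}.
  by rewrite cardF /= -!muln2; lia.
have horner_cubic (u : F) : (legendre_cubic 3%:R).[u] = u * (u + 2%:R) * (u + 4%:R).
  rewrite /legendre_cubic hornerM hornerX hornerD hornerN hornerC horner_exp.
  by rewrite hornerD hornerX hornerC; ring.
have exprN_odd (x : F) : (- x) ^+ n = - x ^+ n.
  by rewrite exprNn -signr_odd n_odd mulN1r.
have sum_eq0 : \sum_(u : F) (legendre_cubic 3%:R ^+ n).[u] = 0.
  apply: (@sum_eq0_antisym _ _ (fun u => - 4%:R - u)) => // u.
    by rewrite opprB addrC subrK.
  by rewrite !horner_exp !horner_cubic -exprN_odd; congr (_ ^+ n); ring.
have := sum_horner_finField size_le.
by rewrite sum_eq0 cardF /= coef_legendre_cubic_exp => /eqP; rewrite eq_sym oppr_eq0 => /eqP.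
Qed.

Lemma dvdz_numq (m d b : int) (x : rat) :
  coprimez m d -> x * d%:~R = b%:~R -> (m %| b)%Z -> (m %| numq x)%Z.
Proof.
move=> m_d xd_b m_b; rewrite -(Gauss_dvdzl _ m_d).
have -> : numq x * d = b * denq x.
  by apply: (@intr_inj rat); rewrite !intrM numqE -xd_b mulrAC.
exact: dvdz_mulr.
Qed.

Theorem corollary2p3 (p : nat) :
  prime p -> (p %% 4 = 3)%N ->
  (Posz p %| numq (legendreP ((p - 1) %/ 2) 3%:R))%Z.
Proof.
move=> p_pr p_mod4; set n := ((p - 1) %/ 2)%N.
have p_eq : p = n.*2.+1 by rewrite /n; lia.
have n_odd : odd n by rewrite (_ : n = (p %/ 4).*2.+1) /= ?odd_double //; rewrite /n; lia.
have p_div : (Posz p %| scaled_legendre n 3%:R)%Z.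
  rewrite (dvdz_pcharf (pchar_Fp p_pr)) rmorph_scaled_legendre rmorph_nat.
  by apply/eqP/scaled_legendre_eq0_finField; rewrite ?card_Fp.
apply: (dvdz_numq _ _ p_div (d := 2 ^+ n)).
- rewrite coprimezXr // coprimezE /= prime_coprime //.
  by apply/negP => /(dvdn_leq (isT : (0 < 2)%N)); lia.
rewrite legendrePE rmorph_scaled_legendre rmorph_nat rmorphXn mulrC mulVKf //.
by rewrite expf_neq0 // intr_eq0.
Qed.
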